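(* Let $F$ be a 3SAT(3) formula satisfying the standing assumptions below, with variables $x_1,\dots,x_p$ and clauses $c_1,\dots,c_q$, and let $(G_s,L)$ be the temporal star constructed from $F$ as described below. For every nonnegative integer $\beta$: there exists a truth assignment $\tau$ of $F$ satisfying at least $\beta$ clauses of $F$ if and only if there exists a (partial) exploration $J$ of $(G_s,L)$ of size $|J|\ge 3p+\beta$.
   Context: A temporal star $(G_s,L)$ consists of a star $G_s$ with center $c$ and a map $L$ assigning to each edge a finite set of positive integer labels (times at which the edge is available). A journey is a sequence of time edges $(u,u_1,l_1),(u_1,u_2,l_2),\dots$ (each $l_t$ a label of the edge traversed) with strictly increasing labels $l_1<l_2<\cdots$. A (partial) exploration is a journey starting and ending at $c$; an edge $\{c,v\}$ is explored if the journey enters it from $c$ to $v$ at some label and later exits it from $v$ to $c$ at a strictly larger label; the size $|J|$ of an exploration $J$ is the number of edges (equivalently leaves) it explores. 3SAT(3): a CNF formula with variables $x_1,\dots,x_p$ and clauses $c_1,\dots,c_q$, each clause having at most $3$ literals and each variable appearing in at most $3$ clauses. Standing assumptions on $F$: every variable occurs at least once unnegated and at least once negated; if a variable occurs three times it occurs exactly once negated and twice unnegated, and if it occurs twice it occurs once negated and once unnegated. Construction of $(G_s,L)$ from $F$: the star has the following edges. For each $i=1,\dots,p$: an edge $e_i$ with labels $50i-10,\ 50i-7,\ 50i+10,\ 50i+13$; an edge $e_i'$ with labels $50i,\ 50i+1$; an edge $e_i''$ with labels $50i+15,\ 50i+16$. For each clause $c_j$, $j=1,\dots,q$, an edge $e_{p+j}$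 whose labels are: for every variable $x_i$ appearing unnegated in $c_j$ such that $c_j$ is the first clause (in the order $c_1,\dots,c_q$) containing $x_i$ unnegated, the labels $50i-12,\ 50i-9$; for every variable $x_i$ appearing unnegated in $c_j$ such that an earlier clause already contains $x_i$ unnegated, the labels $50i-8,\ 50i-5$; for every variable $x_i$ appearing negated in $c_j$, the labels $50i+8,\ 50i+11$. *)

From HB Require Import structures.
From mathcomp Require Import all_boot.

Set Implicit Arguments.
Unset Strict Implicit.
Unset Printing Implicit Defensive.

(* A literal is (i, true) for x_i and (i, false) for the negation of x_i;
   variables are x_1, ..., x_p (1-based).       *)
Definition literal := (nat * bool)%type.
Definition clause := seq literal.
Definition formula := seq clause.

(* c_j for 1 <= j <= q *)
Definition clause_at (F : formula) (j : nat) : clause := nth [::] F j.-1.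

Definition occ_pos (F : formula) (i : nat) : nat := count (fun c => (i, true) \in c) F.
Definition occ_neg (F : formula) (i : nat) : nat := count (fun c => (i, false) \in c) F.

Definition wf_3sat3 (p : nat) (F : formula) : Prop :=
  (forall c, c \in F -> size c <= 3 /\ uniq c /\
                         forall i b, (i, b) \in c -> 1 <= i <= p) /\
  (forall i, 1 <= i <= p ->
     [/\ occ_pos F i + occ_neg F i <= 3,
         1 <= occ_pos F i,
         1 <= occ_neg F i,
         occ_pos F i + occ_neg F i = 3 -> occ_neg F i = 1 /\ occ_pos F i = 2
       & occ_pos F i + occ_neg F i = 2 -> occ_neg F i = 1 /\ occ_pos F i = 1]).

Definition lit_true (tau : nat -> bool) (l : literal) : bool := tau l.1 == l.2.
Definition clause_sat (tau : nat -> bool) (c : clause) : bool := has (lit_true tau) c.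
Definition num_sat (tau : nat -> bool) (F : formula) : nat := count (clause_sat tau) F.

(* Leaves: Ee i = leaf of e_i, Ee' i = leaf of e_i', Ee'' i = leaf of e_i'',
   Ec j = leaf of e_{p+j} (clause c_j).                                 *)
Inductive leaf := Ee of nat | Ee' of nat | Ee'' of nat | Ec of nat.

Definition leaf_code (x : leaf) : nat * nat :=
  match x with Ee i => (0, i) | Ee' i => (1, i) | Ee'' i => (2, i) | Ec j => (3, j) end.
Definition leaf_decode (c : nat * nat) : leaf :=
  match c with (0, i) => Ee i | (1, i) => Ee' i | (2, i) => Ee'' i | (_, j) => Ec j end.
Lemma leaf_codeK : cancel leaf_code leaf_decode. Proof. by case. Qed.
HB.instance Definition _ := Equality.copy leaf (can_type leaf_codeK).

Definition valid_leaf (p q : nat) (x : leaf) : bool :=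
  match x with
  | Ee i | Ee' i | Ee'' i => 1 <= i <= p
  | Ec j => 1 <= j <= q
  end.

Definition leaves (p q : nat) : seq leaf :=
  [seq Ee i | i <- iota 1 p] ++ [seq Ee' i | i <- iota 1 p] ++
  [seq Ee'' i | i <- iota 1 p] ++ [seq Ec j | j <- iota 1 q].

Definition first_pos (F : formula) (i j : nat) : bool :=
  ~~ has (fun k => (i, true) \in clause_at F k) (iota 1 j.-1).

Definition lit_labels (F : formula) (j : nat) (l : literal) : seq nat :=
  let i := l.1 in
  if l.2 then
    (if first_pos F i j then [:: 50 * i - 12; 50 * i - 9]
     else [:: 50 * i - 8; 50 * i - 5])
  else [:: 50 * i + 8; 50 * i + 11].

Definition labels (F : formula) (x : leaf) (l : nat) : bool :=
  match x with
  | Ee i => l \in [:: 50 * i - 10; 50 * i - 7; 50 * i + 10; 50 * i + 13]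
  | Ee' i => l \in [:: 50 * i; 50 * i + 1]
  | Ee'' i => l \in [:: 50 * i + 15; 50 * i + 16]
  | Ec j => has (fun lit => l \in lit_labels F j lit) (clause_at F j)
  end.

(* vertices: None = center c, Some x = leaf x *)
Definition vertex := option leaf.

Definition time_edge (p : nat) (F : formula) (u v : vertex) (l : nat) : bool :=
  match u, v with
  | None, Some x | Some x, None => valid_leaf p (size F) x && labels F x l
  | _, _ => false
  end.

(* A journey starting at c is given by J = [:: (w_1,l_1); ...; (w_n,l_n)]:
   it traverses the time edges (w_0,w_1,l_1), ..., (w_{n-1},w_n,l_n)
   with w_0 = c.  *)
Definition jvert (J : seq (vertex * nat)) (t : nat) : vertex :=
  if t is t'.+1 then (nth (None, 0) J t').1 else None.
Definition jlab (J : seq (vertex * nat)) (t : nat) : nat := (nth (None, 0) J t.-1).2.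

Definition is_exploration (p : nat) (F : formula) (J : seq (vertex * nat)) : Prop :=
  (forall t, 1 <= t <= size J -> time_edge p F (jvert J t.-1) (jvert J t) (jlab J t)) /\
  (forall t, 1 <= t < size J -> jlab J t < jlab J t.+1) /\
  jvert J (size J) = None.

Definition explored (J : seq (vertex * nat)) (x : leaf) : bool :=
  has (fun t =>
         (jvert J t.-1 == None) && (jvert J t == Some x) &&
         has (fun t' => (jvert J t'.-1 == Some x) && (jvert J t' == None)
                        && (jlab J t < jlab J t'))
             (iota t.+1 (size J - t)))
      (iota 1 (size J)).

Definition expl_size (p q : nat) (J : seq (vertex * nat)) : nat :=
  count (explored J) (leaves p q).

From mathcomp Require Import all_boot zify.

Set Implicit Arguments.
Unset Strict Implicit.
Unset Printing Implicit Defensive.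

(* Every exploration is a chain of visits: enter the edge of a leaf at some
   label and leave it at a later one.  The labels of e_i, e_i', e_i'' and the
   x_i-labels of the clause edges all lie in the window [50i-12, 50i+16].
   Inside one window a chain explores at most 3 + max(P, N) edges, where P
   (resp. N) counts the clause edges entered at a label of x_i (resp. of the
   negation of x_i); this finite statement is checked by enumerating all
   chains of abstracted visits.  Giving x_i the majority sign and summing over
   the windows yields |J| <= 3p + #(satisfied clauses), because distinct clause
   edges entered at a true literal are distinct satisfied clauses.
   Conversely, an assignment is turned into a chain that visits, in window i,
   e_i, e_i', e_i'' and the clause edges whose x_i-literal it makes true; the
   occurrence bounds of 3SAT(3) leave at most one such clause per label slot. *)

Lemma sub_in_count (T : eqType) (a1 a2 : pred T) (s : seq T) :
  {in s, forall x, a1 x -> a2 x} -> count a1 s <= count a2 s.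
Proof.
move=> sub12; rewrite -(eq_in_count (a1 := predI a1 (mem s))); last first.
  by move=> x sx /=; rewrite sx andbT.
by apply: sub_count => x /andP[a1x sx]; exact: sub12.
Qed.

Lemma count_key_le1 (T : Type) (U : eqType) (f : T -> U) (s : seq T) (y : U) :
  uniq (map f s) -> count (fun x => f x == y) s <= 1.
Proof. by move=> uf; rewrite -(count_map f (pred1 y)) (count_uniq_mem _ uf) leq_b1. Qed.

Lemma uniq_map_filter (T U : eqType) (f : T -> U) (a : pred T) (s : seq T) :
  uniq (map f s) -> uniq (map f (filter a s)).
Proof. exact/subseq_uniq/map_subseq/filter_subseq. Qed.

Lemma size_le1P (T : Type) (s : seq T) : size s <= 1 -> s = [::] \/ exists x, s = [:: x].
Proof. by case: s => [|x [|y s]]; [left | right; exists x |]. Qed.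

Lemma count_split_and (T : Type) (a b : pred T) (s : seq T) :
  count (fun x => a x && b x) s + count (fun x => a x && ~~ b x) s = count a s.
Proof. by elim: s => //= x s <-; case: (a x); case: (b x) => /=; lia. Qed.

Lemma count_first_occurrence (P : pred nat) (q : nat) :
  count (fun j => P j && ~~ has P (iota 1 j.-1)) (iota 1 q) = has P (iota 1 q).
Proof.
elim: q => // q IH; rewrite -[q.+1]addn1 iotaD count_cat has_cat IH add1n /=.
by case: (has P _); case: (P q.+1).
Qed.

Lemma count_le_blocks (T : eqType) (f : T -> nat) (a b : pred T) (c n : nat) (s : seq T) :
  all (fun x => 0 < f x <= n) s ->
  (forall i, count (fun x => a x && (f x == i)) s <= c + count (fun x => b x && (f x == i)) s) ->
  count a s <= c * n + count b s.
Proof.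
move=> /allP f_range blocks.
have split_top (d : pred T) m : count (fun x => d x && (f x <= m.+1)) s =
    count (fun x => d x && (f x <= m)) s + count (fun x => d x && (f x == m.+1)) s.
  by elim: s {f_range blocks} => //= x s ->; case: (d x) => //=; case: ltngtP; lia.
have below m : count (fun x => a x && (f x <= m)) s <= c * m + count (fun x => b x && (f x <= m)) s.
  elim: m => [|m IH].
    by rewrite (eq_in_count (a2 := pred0)) ?count_pred0 // => x /f_range; rewrite /=; lia.
  by rewrite !split_top; have := blocks m.+1; lia.
rewrite -(eq_in_count (a1 := fun x => a x && (f x <= n))); last first.
  by move=> x /f_range /andP[_ ->]; rewrite andbT.
by apply: leq_trans (below n) _; rewrite leq_add2l; apply: sub_count => x /andP[].
Qed.

Lemma exists_subseq_uniq_keys (T U : eqType) (f : T -> U) (s : seq T) :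
  exists2 s', subseq s' s & uniq (map f s') /\ {subset map f s <= map f s'}.
Proof.
elim: s => [|x s [s' sub [uniq_s' keys]]]; first by exists [::].
case key_x: (f x \in map f s').
- exists s'; first exact: subseq_trans sub (subseq_cons _ _).
  by split=> // y; rewrite inE => /orP[/eqP->|/keys].
- exists (x :: s'); first by rewrite /= eqxx.
  split; first by rewrite /= key_x.
  by move=> y; rewrite !inE => /orP[->|/keys ->]; rewrite ?orbT.
Qed.

Lemma uniq_leaves (n m : nat) : uniq (leaves n m).
Proof.
rewrite /leaves !cat_uniq !has_cat !map_inj_uniq ?iota_uniq; try by move=> a b [].
rewrite /=; repeat (apply/andP; split) => //; rewrite ?negb_or; repeat (apply/andP; split);
 apply/hasPn => x /mapP[i _ ->]; apply/negP => /mapP[k _] //.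
Qed.

Lemma count_clause (P : pred clause) (F : formula) :
  count P F = count (fun j => P (clause_at F j)) (iota 1 (size F)).
Proof.
rewrite -{1}(mkseq_nth [::] F) /mkseq count_map (iotaDl 1 0) count_map.
by apply: eq_count => j; rewrite /preim /clause_at.
Qed.

(** * The bound inside one label window *)

(* A token abstracts a visit inside the window of x_i: the kind of the edge
   (0, 1, 2 for e_i, e_i', e_i'' and 3 for clause edges) and the offsets of its
   entry and exit labels from 50i-12, the exit offset being 29 when the exit
   label lies beyond the window. *)
Definition token := (nat * nat * nat)%type.
Definition token_kind (t : token) : nat := t.1.1.
Definition token_start (t : token) : nat := t.1.2.
Definition token_stop (t : token) : nat := t.2.

(* Clause offsets below 10 are labels of x_i, the others labels of its negation. *)
Definition kind_offsets (k : nat) : seq nat :=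
  match k with
  | 0 => [:: 2; 5; 22; 25]
  | 1 => [:: 12; 13]
  | 2 => [:: 27; 28]
  | _ => [:: 0; 3; 4; 7; 20; 23]
  end.

Definition token_valid (t : token) : bool :=
  [&& token_kind t < 4, token_start t \in kind_offsets (token_kind t),
      token_start t < token_stop t &
      (token_stop t \in kind_offsets (token_kind t)) ||
      (token_kind t == 3) && (token_stop t == 29)].

Definition token_before (t u : token) : bool := token_stop t < token_start u.

Definition positive_token (t : token) : bool := (token_kind t == 3) && (token_start t < 10).
Definition negative_token (t : token) : bool := (token_kind t == 3) && (10 <= token_start t).

Definition tokens : seq token :=
  [seq t <- [seq (ks, e) | ks <- [seq (k, s) | k <- iota 0 4, s <- iota 0 30], e <- iota 0 30]
   | token_valid t].

Fixpoint token_chains (n m : nat) : seq (seq token) :=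
  if n is n'.+1 then
    [::] :: flatten [seq [seq t :: c | c <- token_chains n' (token_stop t).+1]
                    | t <- tokens & m <= token_start t]
  else [:: [::]].

Definition block_bounded (c : seq token) : bool :=
  [==> count (fun t => token_kind t == 0) c <= 1, count (fun t => token_kind t == 1) c <= 1,
       count (fun t => token_kind t == 2) c <= 1 =>
   size c <= 3 + maxn (count positive_token c) (count negative_token c)].

Lemma token_chains_bounded : all block_bounded (token_chains 30 0).
Proof. by vm_compute. Qed.

Lemma token_valid_range (t : token) : token_valid t -> token_start t < token_stop t < 30.
Proof.
case/and4P=> _ _ -> /= /orP[|/andP[_ /eqP-> //]].
by case: (token_kind t) => [|[|[|k]]]; rewrite /= !inE; lia.
Qed.

Lemma mem_tokens (t : token) : token_valid t -> t \in tokens.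
Proof.
move=> valid_t; rewrite mem_filter valid_t andTb.
have := token_valid_range valid_t; case: t valid_t => [[k s] e] /and4P[k4 _ _ _] se.
rewrite /token_kind /token_start /token_stop /= in k4 se.
apply: allpairs_f; last by rewrite mem_iota; lia.
by apply: allpairs_f; rewrite mem_iota; lia.
Qed.

Lemma token_chainsS (n m : nat) : token_chains n.+1 m =
  [::] :: flatten [seq [seq t :: c | c <- token_chains n (token_stop t).+1]
                  | t <- tokens & m <= token_start t].
Proof. by []. Qed.


Lemma mem_token_chains (n m : nat) (c : seq token) :
  all token_valid c -> sorted token_before c ->
  (if c is t :: _ then m <= token_start t else true) -> 30 <= n + m -> c \in token_chains n m.
Proof.
elim: n m c => [|n IH] m [|t c] //.
- by move=> /andP[/token_valid_range] /=; lia.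
move=> /andP[valid_t valid_c] sorted_tc m_t nm.
rewrite token_chainsS inE; apply/orP; right; apply/flattenP.
exists [seq t :: c' | c' <- token_chains n (token_stop t).+1].
  by apply/mapP; exists t; rewrite // mem_filter m_t mem_tokens.
apply: map_f; apply: IH => //.
- exact: path_sorted sorted_tc.
- by case: c sorted_tc {valid_c} => //= u c /andP[].
- by have := token_valid_range valid_t; lia.
Qed.

Lemma token_chain_bound (c : seq token) :
  all token_valid c -> sorted token_before c ->
  (forall k, k < 3 -> count (fun t => token_kind t == k) c <= 1) ->
  size c <= 3 + maxn (count positive_token c) (count negative_token c).
Proof.
move=> valid_c sorted_c kinds.
have /(allP token_chains_bounded) : c \in token_chains 30 0.
  by apply: mem_token_chains => //; case: c {valid_c sorted_c kinds}.
by rewrite /block_bounded !kinds.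
Qed.

(** * Visits and label windows *)

(* The window of x_i starts at label 50i-12: label [l] lies in the window of
   x_[block l], at position [offset l]. *)
Definition block (l : nat) : nat := (l + 12) %/ 50.
Definition offset (l : nat) : nat := (l + 12) %% 50.

Definition kind (x : leaf) : nat :=
  match x with Ee _ => 0 | Ee' _ => 1 | Ee'' _ => 2 | Ec _ => 3 end.
Definition var_leaf (k i : nat) : leaf :=
  match k with 0 => Ee i | 1 => Ee' i | _ => Ee'' i end.

Lemma lit_labels_offset (F : formula) (j i : nat) (b : bool) (l : nat) :
  0 < i -> l \in lit_labels F j (i, b) ->
  [/\ block l = i, offset l \in kind_offsets 3 & (offset l < 10) = b].
Proof.
move=> i_gt0; rewrite /lit_labels /=.
by case: b; first case: first_pos; rewrite !inE /block /offset => l_eq; split; lia.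
Qed.

Definition visit := (leaf * (nat * nat))%type.
Definition vleaf (v : visit) : leaf := v.1.
Definition venter (v : visit) : nat := v.2.1.
Definition vexit (v : visit) : nat := v.2.2.

Definition visit_before (v w : visit) : bool :=
  [&& venter v < vexit v, vexit v < venter w & venter w < vexit w].

Lemma visit_before_trans : transitive visit_before.
Proof. by move=> v u w /and3P[? ? ?] /and3P[? ? ?]; apply/and3P; split; lia. Qed.

Definition token_of (i : nat) (v : visit) : token :=
  (kind (vleaf v), offset (venter v), if block (vexit v) == i then offset (vexit v) else 29).

Lemma token_of_before (i : nat) (v w : visit) :
  block (venter v) = i -> block (venter w) = i -> visit_before v w ->
  token_before (token_of i v) (token_of i w).
Proof.
rewrite /token_before /token_of /token_start /token_stop /=.
by case: eqP; rewrite /visit_before /block /offset => ? ? ? /and3P[? ? ?]; lia.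
Qed.

Section Reduction.

Variables (p : nat) (F : formula).
Hypothesis wfF : wf_3sat3 p F.
Local Notation q := (size F).

Lemma clause_var (j i : nat) (b : bool) : 0 < j <= q -> (i, b) \in clause_at F j -> 0 < i <= p.
Proof.
case: j => // j /andP[_ j_le] lit_in.
by have [_ [_ /(_ i b lit_in)]] := wfF.1 _ (mem_nth [::] j_le).
Qed.

Lemma label_offset (x : leaf) (l : nat) : valid_leaf p q x -> labels F x l ->
  offset l \in kind_offsets (kind x) /\
  match x with
  | Ec j => 0 < block l <= p /\ (block l, offset l < 10) \in clause_at F j
  | Ee i | Ee' i | Ee'' i => block l = i
  end.
Proof.
case: x => [i|i|i|j] /= valid_x; try by rewrite !inE /block /offset => ?; split; lia.
case/hasP=> [[i b]] lit_in; have /andP[i_gt0 i_le] := clause_var valid_x lit_in.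
by case/(lit_labels_offset i_gt0)=> -> -> ->; rewrite i_gt0 i_le.
Qed.

Definition good_visit (v : visit) : bool :=
  [&& valid_leaf p q (vleaf v), labels F (vleaf v) (venter v), labels F (vleaf v) (vexit v)
    & venter v < vexit v].

(** * Explorations are chains of visits *)

Definition visit0 : visit := (Ee 0, (0, 0)).

Definition journey_of (Vs : seq visit) : seq (vertex * nat) :=
  flatten [seq [:: (Some (vleaf v), venter v); (None, vexit v)] | v <- Vs].

Lemma size_journey_of (Vs : seq visit) : size (journey_of Vs) = 2 * size Vs.
Proof. by elim: Vs => //= v Vs; rewrite /journey_of /= => ->; lia. Qed.

Lemma nth_journey_of (Vs : seq visit) (v0 : visit) (k : nat) : k < size Vs ->
  nth (None, 0) (journey_of Vs) (2 * k) = (Some (vleaf (nth v0 Vs k)), venter (nth v0 Vs k)) /\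
  nth (None, 0) (journey_of Vs) (2 * k).+1 = (None, vexit (nth v0 Vs k)).
Proof.
elim: Vs k => [|v Vs IH] [|k] // k_lt.
have -> : 2 * k.+1 = (2 * k).+2 by lia.
exact: IH.
Qed.

Lemma journey_of_step (Vs : seq visit) (v0 : visit) (k : nat) : k < size Vs ->
  let J := journey_of Vs in let v := nth v0 Vs k in
  [/\ jvert J (2 * k).+1 = Some (vleaf v), jlab J (2 * k).+1 = venter v,
      jvert J (2 * k).+2 = None & jlab J (2 * k).+2 = vexit v].
Proof. by move=> /(nth_journey_of v0)[]; rewrite /jvert /jlab /= => -> ->. Qed.

Lemma jvert_journey_of_even (Vs : seq visit) (k : nat) :
  k <= size Vs -> jvert (journey_of Vs) (2 * k) = None.
Proof.
case: k => // k k_le; have -> : 2 * k.+1 = (2 * k).+2 by lia.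
by case: (journey_of_step visit0 k_le).
Qed.

Lemma odd_or_even_succ (t : nat) : 0 < t -> exists k, t = (2 * k).+1 \/ t = (2 * k).+2.
Proof. by move=> t_gt0; exists t.-1./2; lia. Qed.

Lemma explored_journey_of (Vs : seq visit) (x : leaf) :
  all (fun v => venter v < vexit v) Vs -> explored (journey_of Vs) x = (x \in map vleaf Vs).
Proof.
move=> /allP in_out; apply/idP/idP.
- case/hasP=> t; rewrite mem_iota size_journey_of => t_range /andP[/andP[_ /eqP jt] _].
  have t_gt0 : 0 < t by lia.
  have [k [t_odd|t_even]] := odd_or_even_succ t_gt0; subst t.
  + have k_lt : k < size Vs by lia.
    have [jk _ _ _] := journey_of_step visit0 k_lt.
    by move: jt; rewrite jk => -[<-]; apply: map_f; exact: mem_nth.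
  + by move: jt; rewrite (_ : (2 * k).+2 = 2 * k.+1) ?jvert_journey_of_even //; lia.
- case/mapP=> v v_in ->; set k := index v Vs.
  have k_lt : k < size Vs by rewrite index_mem.
  have [jv jin je jout] := journey_of_step v k_lt; rewrite nth_index // in jv jin je jout.
  apply/hasP; exists (2 * k).+1; first by rewrite mem_iota size_journey_of; lia.
  rewrite succnK jvert_journey_of_even ?jv ?eqxx /=; last exact: ltnW.
  apply/hasP; exists (2 * k).+2; first by rewrite mem_iota size_journey_of; lia.
  by rewrite succnK jv je jin jout !eqxx in_out.
Qed.

Lemma time_edge_center (u v : vertex) (l : nat) :
  time_edge p F u v l -> (v == None) = (u != None).
Proof. by case: u v => [x|] [y|]. Qed.

Lemma exploration_good_visits (Vs : seq visit) :
  is_exploration p F (journey_of Vs) -> all good_visit Vs /\ sorted visit_before Vs.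
Proof.
case=> edges [incr _]; have size_J := size_journey_of Vs.
have good_k k : k < size Vs -> good_visit (nth visit0 Vs k).
  move=> k_lt; have [jv jin je jout] := journey_of_step visit0 k_lt.
  have := edges (2 * k).+1; rewrite succnK jvert_journey_of_even ?jv ?jin; last exact: ltnW.
  move=> /(_ ltac:(lia)) /= /andP[valid_v la].
  have := edges (2 * k).+2; rewrite jv je jout => /(_ ltac:(lia)) /= /andP[_ lb].
  by have := incr (2 * k).+1; rewrite jin jout /good_visit valid_v la lb => ->; lia.
split; first by apply/(all_nthP visit0) => k /good_k.
apply/(sortedP visit0) => k k1_lt; have k_lt : k < size Vs by lia.
have [_ jin _ jout] := journey_of_step visit0 k_lt.
have [_ jin' _ _] := journey_of_step visit0 k1_lt.
have /and4P[_ _ _ in_out] := good_k k k_lt.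
have /and4P[_ _ _ in_out'] := good_k k.+1 k1_lt.
have := incr (2 * k).+2; rewrite jout (_ : (2 * k).+3 = (2 * k.+1).+1) ?jin'; last lia.
by move=> /(_ ltac:(lia)) out_in; apply/and3P.
Qed.

Lemma journey_of_exploration (Vs : seq visit) :
  all good_visit Vs -> sorted visit_before Vs -> is_exploration p F (journey_of Vs).
Proof.
move=> /(all_nthP visit0) good_Vs /(sortedP visit0) before.
have size_J := size_journey_of Vs; have step k := @journey_of_step Vs visit0 k.
split; [|split]; last by rewrite size_J jvert_journey_of_even.
- move=> t /andP[t_gt0 t_le]; have [k [] tk] := odd_or_even_succ t_gt0; subst t.
  + have [jv jin _ _] := step k ltac:(lia).
    rewrite succnK jvert_journey_of_even ?jv ?jin /=; last lia.
    by have /and4P[-> -> _ _] := good_Vs k ltac:(lia).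
  + have [jv _ je jout] := step k ltac:(lia).
    rewrite succnK jv je jout /=.
    by have /and4P[-> _ -> _] := good_Vs k ltac:(lia).
- move=> t /andP[t_gt0 t_lt]; have [k [] tk] := odd_or_even_succ t_gt0; subst t.
  + have [_ jin _ jout] := step k ltac:(lia).
    by rewrite jin jout; have /and4P[_ _ _ ->] := good_Vs k ltac:(lia).
  + have [_ _ _ jout] := step k ltac:(lia); have [_ jin' _ _] := step k.+1 ltac:(lia).
    rewrite jout (_ : (2 * k).+3 = (2 * k.+1).+1) ?jin'; last lia.
    by have /and3P[] := before k ltac:(lia).
Qed.

Lemma exploration_journey_of (J : seq (vertex * nat)) :
  is_exploration p F J -> exists Vs, J = journey_of Vs.
Proof.
case=> edges [_ last_center].
have center t : t <= size J -> (jvert J t == None) = ~~ odd t.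
  elim: t => // t IH t_lt; rewrite (time_edge_center (edges t.+1 _)) ?IH //=; lia.
have even_size : ~~ odd (size J) by rewrite -center // last_center.
pose v k : visit := (odflt (Ee 0) (jvert J (2 * k).+1), (jlab J (2 * k).+1, jlab J (2 * k).+2)).
exists (mkseq v (size J)./2).
apply: (@eq_from_nth (vertex * nat) (None, 0)) => [|i i_lt].
  by rewrite size_journey_of size_mkseq; lia.
have k_lt : i./2 < size (mkseq v (size J)./2) by rewrite size_mkseq; lia.
have [jnth_even jnth_odd] := nth_journey_of visit0 k_lt.
rewrite nth_mkseq in jnth_even jnth_odd; last by rewrite size_mkseq in k_lt.
have nthJ t : nth (None, 0) J t = (jvert J t.+1, jlab J t.+1) by rewrite /jvert /jlab; case: nth.
have i_eq : i = 2 * i./2 + odd i by lia.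
case: (odd i) i_eq => /= ->; rewrite ?addn1 ?addn0 ?jnth_even ?jnth_odd nthJ.
- have /eqP -> // : jvert J (2 * i./2).+2 == None by rewrite center; lia.
- have : jvert J (2 * i./2).+1 != None by rewrite center; lia.
  by rewrite /v /vleaf /venter /=; case: (nth _ J _) => [[]].
Qed.

(** * From an exploration to an assignment *)

Lemma token_of_valid (i : nat) (v : visit) :
  good_visit v -> block (venter v) = i -> token_valid (token_of i v).
Proof.
case/and4P=> valid_v /(label_offset valid_v)[o_in b_in] /(label_offset valid_v)[o_out b_out].
move=> in_out bi.
have same_block : block (vexit v) = i -> offset (venter v) < offset (vexit v).
  by rewrite /block /offset in bi *; lia.
rewrite /token_valid /token_of /token_kind /token_start /token_stop /= o_in.
case: (vleaf v) o_in b_in o_out b_out => [k|k|k|j] /= o_in b_in o_out b_out;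
  try by rewrite (_ : block (vexit v) == i) ?o_out ?same_block //; apply/eqP; lia.
case: eqP => [/same_block ->|_]; first by rewrite o_out.
by rewrite eqxx orbT andbT; move: o_in; rewrite !inE; lia.
Qed.

Definition in_block (i : nat) (Ws : seq visit) : seq visit :=
  [seq v <- Ws | block (venter v) == i].

Lemma kind_count_in_block (Ws : seq visit) (i k : nat) :
  all good_visit Ws -> uniq (map vleaf Ws) -> k < 3 ->
  count (fun t => token_kind t == k) (map (token_of i) (in_block i Ws)) <= 1.
Proof.
move=> /allP good_Ws uniq_Ws k_lt3; rewrite count_map.
apply: leq_trans (count_key_le1 (var_leaf k i) (uniq_map_filter _ uniq_Ws)).
apply: sub_in_count => v; rewrite mem_filter => /andP[/eqP bi /good_Ws /and4P[valid_v la _ _]].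
have [_] := label_offset valid_v la; rewrite /preim /token_of /token_kind /= bi.
case: (vleaf v) => [m|m|m|m] /=; try by move=> <- /eqP <-.
by move=> _ /eqP k3; move: k_lt3; rewrite -k3.
Qed.

Lemma size_in_block (Ws : seq visit) (i : nat) :
  all good_visit Ws -> sorted visit_before Ws -> uniq (map vleaf Ws) ->
  size (in_block i Ws) <=
  3 + maxn (count positive_token (map (token_of i) (in_block i Ws)))
           (count negative_token (map (token_of i) (in_block i Ws))).
Proof.
move=> good_Ws sorted_Ws uniq_Ws; rewrite -(size_map (token_of i)).
apply: token_chain_bound => [||k]; last exact: kind_count_in_block.
- apply/allP=> t /mapP[v]; rewrite mem_filter => /andP[/eqP bi v_in] ->.
  exact: token_of_valid (allP good_Ws v v_in) bi.
- rewrite sorted_map; apply: (@sub_in_sorted _ (mem (in_block i Ws)) visit_before).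
  + by move=> v w; rewrite !mem_filter => /andP[/eqP ? _] /andP[/eqP ? _]; exact: token_of_before.
  + exact/allP.
  + exact: sorted_filter visit_before_trans _ _ sorted_Ws.
Qed.

Definition majority_assignment (Ws : seq visit) (i : nat) : bool :=
  count negative_token (map (token_of i) (in_block i Ws)) <=
  count positive_token (map (token_of i) (in_block i Ws)).

Definition satisfying_visit (tau : nat -> bool) (v : visit) : bool :=
  (kind (vleaf v) == 3) && (tau (block (venter v)) == (offset (venter v) < 10)).

Definition clause_index (x : leaf) : nat := if x is Ec j then j else 0.

Lemma count_satisfying_visit (tau : nat -> bool) (Ws : seq visit) :
  all good_visit Ws -> uniq (map vleaf Ws) -> count (satisfying_visit tau) Ws <= num_sat tau F.
Proof.
move=> /allP good_Ws uniq_Ws.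
rewrite -size_filter -(size_map (clause_index \o vleaf)) /num_sat count_clause -size_filter.
apply: uniq_leq_size.
- rewrite (map_comp clause_index vleaf) map_inj_in_uniq ?uniq_map_filter //.
  move=> _ _ /mapP[v + ->] /mapP[w + ->]; rewrite !mem_filter /satisfying_visit.
  move=> /andP[/andP[kv _] _] /andP[/andP[kw _] _].
  by case: (vleaf v) kv => // j _; case: (vleaf w) kw => // j' _ /= ->.
- move=> c /mapP[v]; rewrite mem_filter /=.
  move=> /andP[/andP[/eqP ec sat] /good_Ws/and4P[valid_v la _ _]] ->.
  have [_] := label_offset valid_v la.
  case: (vleaf v) ec valid_v => // j _ /= valid_j [_ lit_in].
  rewrite mem_filter mem_iota; apply/andP; split; last by move: valid_j; lia.
  by apply/hasP; exists (block (venter v), offset (venter v) < 10); rewrite // /lit_true (eqP sat).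
Qed.

Lemma size_visits_le_num_sat (Ws : seq visit) :
  all good_visit Ws -> sorted visit_before Ws -> uniq (map vleaf Ws) ->
  exists tau, size Ws <= 3 * p + num_sat tau F.
Proof.
move=> good_Ws sorted_Ws uniq_Ws; set tau := majority_assignment Ws; exists tau.
suff : size Ws <= 3 * p + count (satisfying_visit tau) Ws.
  by have := count_satisfying_visit tau good_Ws uniq_Ws; lia.
rewrite -count_predT.
apply: (@count_le_blocks _ (fun v => block (venter v))) => [|i].
  apply/allP=> v /(allP good_Ws)/and4P[valid_v la _ _]; have [_] := label_offset valid_v la.
  by case: (vleaf v) valid_v => /= [k|k|k|j] valid_k; [move=> ->..|case].
rewrite -count_filter count_predT -count_filter -/(in_block i Ws).
apply: leq_trans (size_in_block i good_Ws sorted_Ws uniq_Ws) _; rewrite leq_add2l.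
have -> : count (satisfying_visit tau) (in_block i Ws) =
    count (if tau i then positive_token else negative_token) (map (token_of i) (in_block i Ws)).
  rewrite count_map; apply: eq_in_count => v; rewrite mem_filter => /andP[/eqP bi _].
  rewrite /satisfying_visit /preim /token_of /positive_token /negative_token.
  by rewrite /token_kind /token_start /= bi; case: (tau i); case: ltnP.
by rewrite /tau /majority_assignment; case: ifP; lia.
Qed.

Lemma expl_size_journey_of (Vs : seq visit) :
  all good_visit Vs -> sorted visit_before Vs ->
  exists tau, expl_size p q (journey_of Vs) <= 3 * p + num_sat tau F.
Proof.
move=> good_Vs sorted_Vs.
have [Ws sub [uniq_Ws keys]] := exists_subseq_uniq_keys vleaf Vs.
have good_Ws : all good_visit Ws by apply/allP => v /(mem_subseq sub) /(allP good_Vs).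
have sorted_Ws := subseq_sorted visit_before_trans sub sorted_Vs.
have [tau le_tau] := size_visits_le_num_sat good_Ws sorted_Ws uniq_Ws.
exists tau; apply: leq_trans le_tau; rewrite /expl_size -size_filter -(size_map vleaf Ws).
apply: uniq_leq_size => [|x]; first by rewrite filter_uniq ?uniq_leaves.
rewrite mem_filter explored_journey_of => [/andP[/keys] //|].
by apply: sub_all good_Vs => v /and4P[].
Qed.

(** * From an assignment to an exploration *)

Lemma occurrence_bounds (i : nat) : 0 < i <= p -> 0 < occ_pos F i <= 2 /\ occ_neg F i <= 1.
Proof.
move=> i_range; have [le3 pos_gt0 neg_gt0 eq3 eq2] := wfF.2 i i_range.
have [/eq2|/eq3] : occ_pos F i + occ_neg F i = 2 \/ occ_pos F i + occ_neg F i = 3 by lia.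
all: by lia.
Qed.

Definition first_pos_clauses (i : nat) : seq nat :=
  [seq j <- iota 1 q | ((i, true) \in clause_at F j) && first_pos F i j].
Definition later_pos_clauses (i : nat) : seq nat :=
  [seq j <- iota 1 q | ((i, true) \in clause_at F j) && ~~ first_pos F i j].
Definition neg_clauses (i : nat) : seq nat :=
  [seq j <- iota 1 q | (i, false) \in clause_at F j].

Lemma size_first_pos_clauses (i : nat) : size (first_pos_clauses i) <= 1.
Proof.
by rewrite size_filter (count_first_occurrence (fun j => (i, true) \in clause_at F j)) leq_b1.
Qed.

Lemma size_later_pos_clauses (i : nat) : 0 < i <= p -> size (later_pos_clauses i) <= 1.
Proof.
move=> /occurrence_bounds[/andP[]]; rewrite /occ_pos count_clause => pos_gt0 + _.
rewrite -(count_split_and _ (first_pos F i)) size_filter.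
by rewrite (count_first_occurrence (fun j => (i, true) \in clause_at F j)) has_count pos_gt0.
Qed.

Lemma size_neg_clauses (i : nat) : 0 < i <= p -> size (neg_clauses i) <= 1.
Proof. by move=> /occurrence_bounds[_]; rewrite size_filter /occ_neg count_clause. Qed.

Definition clause_visits (l1 l2 : nat) (js : seq nat) : seq visit :=
  [seq (Ec j, (l1, l2)) | j <- js].

Section Assignment.

Variable tau : nat -> bool.

Definition assignment_block (i : nat) : seq visit :=
  if tau i then
    clause_visits (50 * i - 12) (50 * i - 9) (first_pos_clauses i) ++
    clause_visits (50 * i - 8) (50 * i - 5) (later_pos_clauses i) ++
    [:: (Ee' i, (50 * i, 50 * i + 1)); (Ee i, (50 * i + 10, 50 * i + 13));
        (Ee'' i, (50 * i + 15, 50 * i + 16))]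
  else
    [:: (Ee i, (50 * i - 10, 50 * i - 7)); (Ee' i, (50 * i, 50 * i + 1))] ++
    clause_visits (50 * i + 8) (50 * i + 11) (neg_clauses i) ++
    [:: (Ee'' i, (50 * i + 15, 50 * i + 16))].

Definition assignment_visits : seq visit := flatten [seq assignment_block i | i <- iota 1 p].

Definition in_window (i : nat) (v : visit) : bool :=
  [&& 50 * i - 12 <= venter v, venter v < vexit v & vexit v <= 50 * i + 16].

Lemma assignment_block_ordered (i : nat) : 0 < i <= p ->
  pairwise visit_before (assignment_block i) && all (in_window i) (assignment_block i).
Proof.
move=> i_range; rewrite /assignment_block; case: (tau i).
- case/size_le1P: (size_first_pos_clauses i) => [->|[j1 ->]];
  case/size_le1P: (size_later_pos_clauses i_range) => [->|[j2 ->]];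
  by rewrite /= /visit_before /in_window /venter /vexit /=; lia.
- case/size_le1P: (size_neg_clauses i_range) => [->|[j ->]];
  by rewrite /= /visit_before /in_window /venter /vexit /=; lia.
Qed.

Lemma assignment_blocks_pairwise (m n : nat) : m + n <= p ->
  pairwise visit_before (flatten [seq assignment_block i | i <- iota m.+1 n]).
Proof.
elim: n m => [|n IH] m mn //=; rewrite pairwise_cat IH; last lia.
have /andP[-> window] := @assignment_block_ordered m.+1 ltac:(lia); rewrite !andbT.
apply/allrelP => v w v_in /flattenP[vs /mapP[k]]; rewrite mem_iota => k_range -> w_in.
have /andP[_ /allP /(_ w w_in)] := @assignment_block_ordered k ltac:(lia).
by move/allP: window => /(_ v v_in); rewrite /in_window /visit_before; lia.
Qed.

Lemma assignment_visits_sorted : sorted visit_before assignment_visits.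
Proof. by rewrite (sorted_pairwise visit_before_trans) (assignment_blocks_pairwise (m := 0)). Qed.

Lemma good_clause_visits (i : nat) (b : bool) (l1 l2 : nat) (js : seq nat) :
  l1 < l2 ->
  {in js, forall j,
    [/\ 0 < j <= q, (i, b) \in clause_at F j & lit_labels F j (i, b) = [:: l1; l2]]} ->
  all good_visit (clause_visits l1 l2 js).
Proof.
move=> l12 js_ok; apply/allP => v /mapP[j /js_ok[j_range lit_in labs] ->].
rewrite /good_visit /vleaf /venter /vexit /= j_range l12 andbT.
by apply/and3P; split=> //; apply/hasP; exists (i, b); rewrite // labs !inE eqxx ?orbT.
Qed.

Lemma assignment_visits_good : all good_visit assignment_visits.
Proof.
apply/allP => v /flattenP[vs /mapP[i]]; rewrite mem_iota => i_range -> {vs}.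
have in_range (Q : pred nat) j : j \in [seq j <- iota 1 q | Q j] -> 0 < j <= q /\ Q j.
  by rewrite mem_filter mem_iota => /andP[Qj j_range]; split=> //; lia.
apply/allP: v; rewrite /assignment_block; case: (tau i); rewrite !all_cat.
- rewrite (@good_clause_visits i true) ?(@good_clause_visits i true) /=; first last.
  + move=> j /in_range[j_range /andP[lit_in fp]]; split=> //.
    by rewrite /lit_labels /=; move: fp; case: first_pos.
  + lia.
  + move=> j /in_range[j_range /andP[lit_in fp]]; split=> //.
    by rewrite /lit_labels /=; move: fp; case: first_pos.
  + lia.
  by rewrite /good_visit /vleaf /venter /vexit /= !inE; lia.
- rewrite (@good_clause_visits i false) /=; first last.
  + by move=> j /in_range[].
  + lia.
  by rewrite /good_visit /vleaf /venter /vexit /= !inE; lia.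
Qed.

Lemma leaf_in_assignment (i : nat) (x : leaf) : 0 < i <= p ->
  x \in map vleaf (assignment_block i) -> x \in map vleaf assignment_visits.
Proof.
move=> i_range x_in; rewrite /assignment_visits map_flatten; apply/flattenP.
exists (map vleaf (assignment_block i)) => //; rewrite -map_comp.
by apply: (map_f (map vleaf \o assignment_block)); rewrite mem_iota; lia.
Qed.

Lemma vleaf_clause_visits (l1 l2 : nat) (js : seq nat) :
  map vleaf (clause_visits l1 l2 js) = map Ec js.
Proof. by rewrite -map_comp. Qed.

Lemma var_leaves_in_assignment (i : nat) : 0 < i <= p ->
  all (mem (map vleaf assignment_visits)) [:: Ee i; Ee' i; Ee'' i].
Proof.
move=> i_range; apply/allP => x x_in; apply: (leaf_in_assignment i_range).
rewrite /assignment_block; move: x_in; rewrite !inE.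
by case: (tau i) => /or3P[]/eqP->; rewrite !map_cat !mem_cat /= !inE eqxx ?orbT.
Qed.

Lemma sat_clause_in_assignment (j : nat) : 0 < j <= q ->
  clause_sat tau (clause_at F j) -> Ec j \in map vleaf assignment_visits.
Proof.
move=> j_range /hasP[[i b] lit_in /eqP /= tau_i].
have i_range := clause_var j_range lit_in; apply: (leaf_in_assignment i_range).
have Ec_inj : injective Ec by move=> ? ? [].
have j_iota : j \in iota 1 q by rewrite mem_iota; lia.
case: b tau_i lit_in => tau_i lit_in; rewrite /assignment_block tau_i !map_cat.
all: rewrite !vleaf_clause_visits !mem_cat !(mem_map Ec_inj) !mem_filter j_iota lit_in //=.
by case: first_pos.
Qed.

Lemma expl_size_assignment : 3 * p + num_sat tau F <= expl_size p q (journey_of assignment_visits).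
Proof.
have explored_x x : x \in map vleaf assignment_visits -> explored (journey_of assignment_visits) x.
  by rewrite explored_journey_of //; apply: sub_all assignment_visits_good => v /and4P[].
have all_vars (f : nat -> leaf) : (forall i, 0 < i <= p -> f i \in map vleaf assignment_visits) ->
    count (preim f (explored (journey_of assignment_visits))) (iota 1 p) = p.
  move=> f_in; rewrite -[RHS](size_iota 1 p) -count_predT; apply: eq_in_count => i.
  by rewrite mem_iota /preim => i_range; apply: explored_x; apply: f_in; lia.
have num_sat_le :
    num_sat tau F <= count (preim Ec (explored (journey_of assignment_visits))) (iota 1 q).
  rewrite /num_sat count_clause; apply: sub_in_count => j; rewrite mem_iota => j_range sat_j.
  by apply: explored_x; apply: sat_clause_in_assignment => //; lia.
rewrite /expl_size /leaves !count_cat !count_map !all_vars.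
- by rewrite mulSn mul2n -addnn -!addnA !leq_add2l.
all: by move=> i /var_leaves_in_assignment /and4P[].
Qed.

End Assignment.

End Reduction.

Unset Implicit Arguments.

Theorem lemma2 (p : nat) (F : formula) (beta : nat) :
  wf_3sat3 p F ->
  (exists tau : nat -> bool, beta <= num_sat tau F) <->
  (exists J : seq (vertex * nat),
      is_exploration p F J /\ 3 * p + beta <= expl_size p (size F) J).
Proof.
move=> wfF; split=> [[tau beta_le] | [J [expl_J size_le]]].
- exists (journey_of (assignment_visits p F tau)); split.
    by apply: journey_of_exploration;
      [exact: assignment_visits_good | exact: assignment_visits_sorted].
  by apply: leq_trans (expl_size_assignment wfF tau); rewrite leq_add2l.
- have [Vs J_eq] := exploration_journey_of expl_J; subst J.
  have [good_Vs sorted_Vs] := exploration_good_visits expl_J.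
  have [tau expl_le] := expl_size_journey_of wfF good_Vs sorted_Vs.
  by exists tau; rewrite -(leq_add2l (3 * p)); apply: leq_trans size_le expl_le.
Qed.
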